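(* Let $(L,[\cdot,\cdot],\alpha,\beta)$ be a left BiHom-Lie algebra and let $f:L\to L$ be a linear map with $f\circ\alpha=\alpha\circ f$ and $f\circ\beta=\beta\circ f$. Define two operations on $L$ by $x\star y=[f(x),y]$ and $x\star' y=[x,f(y)]$ for all $x,y\in L$. Then: (i) $(L,\star,\alpha,\beta)$ is a BiHom-Novikov algebra if and only if for all $x,y,z\in L$: $f([f(\beta(x)),\alpha(y)]+[\beta(x),f(\alpha(y))])-[f(\beta(x)),f(\alpha(y))]\in Z_l(\beta(L))$ and $[f([f(x),\beta(y)]),\alpha\beta(z)]=[f([f(x),\beta(z)]),\alpha\beta(y)]$. (ii) If $\alpha$ and $\beta$ are bijective, then $(L,\star',\alpha,\beta)$ is a BiHom-Novikov algebra if and only if for all $x,y,z\in L$: $[[\beta(x),f(\alpha(y))]+[f(\beta(x)),\alpha(y)],f(\beta(z))]-[\alpha\beta(x),f([\alpha(y),f(z)])]+[\alpha\beta(y),f([\alpha(x),f(z)])]=0$ and $[f(\beta(x)),f(\alpha(y))]\in Z_r(\alpha(L))$.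
   Context: Work over a field. A left BiHom-Lie algebra is a 4-tuple $(L,[\cdot,\cdot],\alpha,\beta)$ with $[\cdot,\cdot]$ bilinear and $\alpha,\beta:L\to L$ linear such that $\alpha\beta=\beta\alpha$, $\alpha([x,y])=[\alpha(x),\alpha(y)]$, $\beta([x,y])=[\beta(x),\beta(y)]$, $[\alpha\beta(x),[y,z]]=[[\beta(x),y],\beta(z)]+[\beta(y),[\alpha(x),z]]$ and $[\beta(x),\alpha(y)]=-[\beta(y),\alpha(x)]$ for all $x,y,z$. Let $Z_l(\beta(L))=\{x\in L: [x,\beta(y)]=0\ \forall y\in L\}$ and $Z_r(\alpha(L))=\{x\in L:[\alpha(y),x]=0\ \forall y\in L\}$. A BiHom-Novikov algebra is a 4-tuple $(A,\mu,\alpha,\beta)$ with $\mu:A\otimes A\to A$ (written $x\cdot y$) and commuting linear maps $\alpha,\beta$ such that for all $x,y,z$: $\alpha(x\cdot y)=\alpha(x)\cdot\alpha(y)$, $\beta(x\cdot y)=\beta(x)\cdot\beta(y)$, $(\beta(x)\cdot\alpha(y))\cdot\beta(z)-\alpha\beta(x)\cdot(\alpha(y)\cdot z)=(\beta(y)\cdot\alpha(x))\cdot\beta(z)-\alpha\beta(y)\cdot(\alpha(x)\cdot z)$, and $(x\cdot\beta(y))\cdot\alpha\beta(z)=(x\cdot\beta(z))\cdot\alpha\beta(y)$. *)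

From HB Require Import structures.
From mathcomp Require Import all_boot all_algebra.
Set Implicit Arguments. Unset Strict Implicit. Unset Printing Implicit Defensive.
Import GRing.Theory.
Local Open Scope ring_scope.

Section BiHom.
Variables (K : fieldType) (L : lmodType K).

Definition lin_map (f : L -> L) : Prop :=
  forall (a : K) (x y : L), f (a *: x + y) = a *: f x + f y.

Definition bilin_map (m : L -> L -> L) : Prop :=
  (forall (a : K) (x y z : L), m (a *: x + y) z = a *: m x z + m y z) /\
  (forall (a : K) (x y z : L), m z (a *: x + y) = a *: m z x + m z y).

Definition is_left_BiHomLie (br : L -> L -> L) (al be : L -> L) : Prop :=
  bilin_map br /\ lin_map al /\ lin_map be /\
      (forall x, al (be x) = be (al x)) /\
      (forall x y, al (br x y) = br (al x) (al y)) /\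
      (forall x y, be (br x y) = br (be x) (be y)) /\
      (forall x y z, br (al (be x)) (br y z)
                     = br (br (be x) y) (be z) + br (be y) (br (al x) z)) /\
    (forall x y, br (be x) (al y) = - br (be y) (al x)).

Definition is_BiHomNovikov (mu : L -> L -> L) (al be : L -> L) : Prop :=
  bilin_map mu /\ lin_map al /\ lin_map be /\
      (forall x, al (be x) = be (al x)) /\
      (forall x y, al (mu x y) = mu (al x) (al y)) /\
      (forall x y, be (mu x y) = mu (be x) (be y)) /\
      (forall x y z, mu (mu (be x) (al y)) (be z) - mu (al (be x)) (mu (al y) z)
                     = mu (mu (be y) (al x)) (be z) - mu (al (be y)) (mu (al x) z)) /\
    (forall x y z, mu (mu x (be y)) (al (be z)) = mu (mu x (be z)) (al (be y))).

Definition in_Zl (br : L -> L -> L) (be : L -> L) (x : L) : Prop :=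
  forall y, br x (be y) = 0.
Definition in_Zr (br : L -> L -> L) (al : L -> L) (x : L) : Prop :=
  forall y, br (al y) x = 0.

End BiHom.

From HB Require Import structures.
From mathcomp Require Import all_boot all_algebra.
Import GRing.Theory.
Set Implicit Arguments. Unset Strict Implicit. Unset Printing Implicit Defensive.
Local Open Scope ring_scope.

(* Both products inherit bilinearity and multiplicativity of [al], [be] from
   the bracket because [f] commutes with [al] and [be], so only the two Novikov
   identities matter.  For [x * y = [f x, y]], the BiHom-Jacobi identity at
   [(f x, f (al y), z)] together with skew-symmetry turns the defect of left
   symmetry into [[f ([f (be x), al y] + [be x, f (al y)]) - [f (be x), f (al y)], be z]],
   while right commutativity is literally the second condition.  For
   [x * y = [x, f y]], one skew-symmetry swap turns the defect of left symmetry
   into the first condition of (ii), and the BiHom-Jacobi identity turns the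
   defect of right commutativity at [be x] into [[al (be x), [f (be y), f (al z)]]];
   surjectivity of [be] then gives the [Z_r(al(L))] condition. *)

Section BiHomAlgebras.
Variables (K : fieldType) (L : lmodType K).
Implicit Types (f : L -> L) (m : L -> L -> L).

Lemma lin_mapD f : lin_map f -> {morph f : x y / x + y}.
Proof. by move=> f_lin x y; have := f_lin 1 x y; rewrite !scale1r. Qed.

Lemma lin_map0 f : lin_map f -> f 0 = 0.
Proof. by move=> f_lin; apply: (addrI (f 0)); rewrite -lin_mapD // !addr0. Qed.

Lemma lin_mapN f : lin_map f -> {morph f : x / - x}.
Proof.
by move=> f_lin x; have := f_lin (-1) x 0; rewrite !addr0 lin_map0 // addr0 !scaleN1r.
Qed.

Lemma lin_mapB f : lin_map f -> {morph f : x y / x - y}.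
Proof. by move=> f_lin x y; rewrite lin_mapD // lin_mapN. Qed.

Lemma bilin_mapl m : bilin_map m -> forall z, lin_map (m^~ z).
Proof. by case=> m_linl _ z a x y; apply: m_linl. Qed.

Lemma bilin_mapr m : bilin_map m -> forall z, lin_map (m z).
Proof. by case=> _ m_linr z a x y; apply: m_linr. Qed.

Definition bihom_assoc m (al be : L -> L) (x y z : L) : L :=
  m (m (be x) (al y)) (be z) - m (al (be x)) (m (al y) z).

Lemma is_BiHomNovikovP m (al be : L -> L) :
  bilin_map m -> lin_map al -> lin_map be -> (forall x, al (be x) = be (al x)) ->
  (forall x y, al (m x y) = m (al x) (al y)) ->
  (forall x y, be (m x y) = m (be x) (be y)) ->
  is_BiHomNovikov m al be <->
  (forall x y z, bihom_assoc m al be x y z = bihom_assoc m al be y x z) /\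
  (forall x y z, m (m x (be y)) (al (be z)) = m (m x (be z)) (al (be y))).
Proof.
move=> *; split; first by case=> [_ [_ [_ [_ [_ [_ []]]]]]].
by case=> assoc_sym right_comm; do 6 split=> //.
Qed.

End BiHomAlgebras.

Section InducedProducts.
Variables (K : fieldType) (L : lmodType K) (br : L -> L -> L) (al be f : L -> L).
Hypothesis BiHomLie : is_left_BiHomLie br al be.
Hypothesis f_lin : lin_map f.
Hypothesis f_al : forall x, f (al x) = al (f x).
Hypothesis f_be : forall x, f (be x) = be (f x).

Local Notation star := (fun x y => br (f x) y).
Local Notation star' := (fun x y => br x (f y)).

Let br_bilin : bilin_map br := proj1 BiHomLie.
Let br_linl := bilin_mapl br_bilin.
Let br_linr := bilin_mapr br_bilin.

Lemma left_BiHomLie_albe x : al (be x) = be (al x).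
Proof. by case: BiHomLie => _ [_ [_ []]]. Qed.

Lemma left_BiHomLie_alM x y : al (br x y) = br (al x) (al y).
Proof. by case: BiHomLie => _ [_ [_ [_ []]]]. Qed.

Lemma left_BiHomLie_beM x y : be (br x y) = br (be x) (be y).
Proof. by case: BiHomLie => _ [_ [_ [_ [_ []]]]]. Qed.

Lemma left_BiHomLie_jacobi x y z :
  br (al (be x)) (br y z) = br (br (be x) y) (be z) + br (be y) (br (al x) z).
Proof. by case: BiHomLie => _ [_ [_ [_ [_ [_ []]]]]]. Qed.

Lemma left_BiHomLie_skew x y : br (be x) (al y) = - br (be y) (al x).
Proof. by case: BiHomLie => _ [_ [_ [_ [_ [_ [_]]]]]]. Qed.

Lemma star_bilin : bilin_map star.
Proof. by split=> a x y z; rewrite ?f_lin ?br_linl ?br_linr. Qed.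

Lemma star'_bilin : bilin_map star'.
Proof. by split=> a x y z; rewrite ?f_lin ?br_linl ?br_linr. Qed.

Lemma star_morph g : (forall x, f (g x) = g (f x)) ->
  (forall x y, g (br x y) = br (g x) (g y)) ->
  forall x y, g (star x y) = star (g x) (g y).
Proof. by move=> f_g gM x y; rewrite gM f_g. Qed.

Lemma star'_morph g : (forall x, f (g x) = g (f x)) ->
  (forall x y, g (br x y) = br (g x) (g y)) ->
  forall x y, g (star' x y) = star' (g x) (g y).
Proof. by move=> f_g gM x y; rewrite gM f_g. Qed.

Lemma is_BiHomNovikov_starP :
  is_BiHomNovikov star al be <->
  (forall x y z, bihom_assoc star al be x y z = bihom_assoc star al be y x z) /\
  (forall x y z, star (star x (be y)) (al (be z)) = star (star x (be z)) (al (be y))).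
Proof.
have [_ [al_lin [be_lin _]]] := BiHomLie.
apply: is_BiHomNovikovP => //; first exact: star_bilin; first exact: left_BiHomLie_albe.
  exact: star_morph f_al left_BiHomLie_alM.
exact: star_morph f_be left_BiHomLie_beM.
Qed.

Lemma is_BiHomNovikov_star'P :
  is_BiHomNovikov star' al be <->
  (forall x y z, bihom_assoc star' al be x y z = bihom_assoc star' al be y x z) /\
  (forall x y z, star' (star' x (be y)) (al (be z)) = star' (star' x (be z)) (al (be y))).
Proof.
have [_ [al_lin [be_lin _]]] := BiHomLie.
apply: is_BiHomNovikovP => //; first exact: star'_bilin; first exact: left_BiHomLie_albe.
  exact: star'_morph f_al left_BiHomLie_alM.
exact: star'_morph f_be left_BiHomLie_beM.
Qed.

Lemma star_assoc_skew x y z :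
  bihom_assoc star al be x y z - bihom_assoc star al be y x z
  = br (f (br (f (be x)) (al y) + br (be x) (f (al y))) - br (f (be x)) (f (al y)))
       (be z).
Proof.
have jacobi := left_BiHomLie_jacobi (f x) (f (al y)) z.
rewrite -f_be -f_al -f_be -f_al left_BiHomLie_albe in jacobi.
have swap : br (be x) (f (al y)) = - br (f (be y)) (al x).
  by rewrite f_al f_be left_BiHomLie_skew.
rewrite /bihom_assoc !left_BiHomLie_albe jacobi swap.
rewrite (lin_mapD f_lin) (lin_mapN f_lin).
rewrite (lin_mapB (br_linl _)) (lin_mapD (br_linl _)) (lin_mapN (br_linl _)).
by rewrite opprD opprB addrA addrA addrNK addrAC.
Qed.

Lemma star'_assoc_skew x y z :
  bihom_assoc star' al be x y z - bihom_assoc star' al be y x z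
  = br (br (be x) (f (al y)) + br (f (be x)) (al y)) (f (be z))
    - br (al (be x)) (f (br (al y) (f z)))
    + br (al (be y)) (f (br (al x) (f z))).
Proof.
have swap : br (be y) (f (al x)) = - br (f (be x)) (al y).
  by rewrite f_al f_be left_BiHomLie_skew.
rewrite /bihom_assoc swap (lin_mapN (br_linl _)) (lin_mapD (br_linl _)).
by rewrite opprD !opprK addrA (addrAC (br _ (f (be z)))).
Qed.

Lemma star'_right_comm x y z :
  br (br (be x) (f (be y))) (f (al (be z))) - br (br (be x) (f (be z))) (f (al (be y)))
  = br (al (be x)) (br (f (be y)) (f (al z))).
Proof.
have -> : br (br (be x) (f (be z))) (f (al (be y)))
          = - br (be (f (be y))) (br (al x) (f (al z))).
  rewrite (f_be z) -left_BiHomLie_beM (f_al (be y)) left_BiHomLie_skew.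
  by rewrite left_BiHomLie_alM -f_al.
by rewrite opprK left_BiHomLie_jacobi left_BiHomLie_albe (f_be (al z)).
Qed.

Lemma star_assoc_symP :
  (forall x y z, bihom_assoc star al be x y z = bihom_assoc star al be y x z) <->
  (forall x y, in_Zl br be
     (f (br (f (be x)) (al y) + br (be x) (f (al y))) - br (f (be x)) (f (al y)))).
Proof.
split=> sym x y z; first by rewrite -star_assoc_skew sym subrr.
by apply/eqP; rewrite -subr_eq0 star_assoc_skew; apply/eqP/sym.
Qed.

Lemma star'_assoc_symP :
  (forall x y z, bihom_assoc star' al be x y z = bihom_assoc star' al be y x z) <->
  (forall x y z,
     br (br (be x) (f (al y)) + br (f (be x)) (al y)) (f (be z))
     - br (al (be x)) (f (br (al y) (f z)))
     + br (al (be y)) (f (br (al x) (f z))) = 0).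
Proof.
split=> sym x y z; first by rewrite -star'_assoc_skew sym subrr.
by apply/eqP; rewrite -subr_eq0 star'_assoc_skew sym.
Qed.

Lemma star'_right_commP : (forall w, exists v, be v = w) ->
  (forall x y z,
     star' (star' x (be y)) (al (be z)) = star' (star' x (be z)) (al (be y))) <->
  (forall x y, in_Zr br al (br (f (be x)) (f (al y)))).
Proof.
move=> be_surj; split=> comm x y.
  move=> w; have [v <-] := be_surj w.
  by rewrite -star'_right_comm /= comm subrr.
move=> z; have [v <-] := be_surj x.
by apply/eqP; rewrite -subr_eq0 star'_right_comm; apply/eqP/comm.
Qed.

End InducedProducts.

Theorem proposition2p12 (K : fieldType) (L : lmodType K)
  (br : L -> L -> L) (al be f : L -> L) :
  is_left_BiHomLie br al be ->
  lin_map f ->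
  (forall x, f (al x) = al (f x)) ->
  (forall x, f (be x) = be (f x)) ->
  (* (i) *)
  (is_BiHomNovikov (fun x y => br (f x) y) al be <->
   ((forall x y, in_Zl br be
        (f (br (f (be x)) (al y) + br (be x) (f (al y))) - br (f (be x)) (f (al y)))) /\
    (forall x y z, br (f (br (f x) (be y))) (al (be z))
                   = br (f (br (f x) (be z))) (al (be y))))) /\
  (* (ii) *)
  (bijective al -> bijective be ->
   (is_BiHomNovikov (fun x y => br x (f y)) al be <->
    ((forall x y z,
        br (br (be x) (f (al y)) + br (f (be x)) (al y)) (f (be z))
        - br (al (be x)) (f (br (al y) (f z)))
        + br (al (be y)) (f (br (al x) (f z))) = 0) /\
     (forall x y, in_Zr br al (br (f (be x)) (f (al y))))))).
Proof.
move=> BiHomLie f_lin f_al f_be; split.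
  apply: iff_trans (is_BiHomNovikov_starP BiHomLie f_lin f_al f_be) _.
  exact: and_iff_compat_r _ (star_assoc_symP BiHomLie f_lin f_al f_be).
move=> _ [be' _ be'K].
have be_surj w : exists v, be v = w by exists (be' w).
apply: iff_trans (is_BiHomNovikov_star'P BiHomLie f_lin f_al f_be) _.
apply: iff_trans (and_iff_compat_r _ (star'_assoc_symP BiHomLie f_al f_be)) _.
exact: and_iff_compat_l _ (star'_right_commP BiHomLie f_al f_be be_surj).
Qed.
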